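(* Let $G$ be a finite group (with the discrete topology), let $G_1, G_2$ be subgroups of $G$, and let $\varphi \colon \widetilde G \to G$ be a continuous surjective homomorphism from a profinite group $\widetilde G$ such that the profinite groups $\varphi^{-1}(G_1)$ and $\varphi^{-1}(G_2)$ are not isomorphic. Assume that for every positive integer $n$, $\widetilde G$ has only finitely many open subgroups of index $n$. Then there exist a finite group $H$, a continuous surjective homomorphism $\psi \colon \widetilde G \to H$, and a group homomorphism $\theta \colon H \to G$ such that $\varphi = \theta \circ \psi$ and $\theta^{-1}(G_1)$ and $\theta^{-1}(G_2)$ are not isomorphic. *)

From HB Require Import structures.
From mathcomp Require Import all_boot all_order all_algebra all_fingroup.
From mathcomp Require Import all_classical all_reals all_analysis.
Set Implicit Arguments. Unset Strict Implicit. Unset Printing Implicit Defensive.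
Import Order.TTheory GRing.Theory Num.Theory.
Local Open Scope classical_set_scope.
Local Open Scope card_scope.

Definition is_group {T : Type} (mul : T -> T -> T) (one : T) (inv : T -> T) :=
  [/\ (forall x y z, mul x (mul y z) = mul (mul x y) z),
      (forall x, mul one x = x),
      (forall x, mul x one = x),
      (forall x, mul (inv x) x = one) &
      (forall x, mul x (inv x) = one)].

Definition is_topological_group {T : topologicalType}
  (mul : T -> T -> T) (one : T) (inv : T -> T) :=
  [/\ is_group mul one inv,
      continuous (fun p : T * T => mul p.1 p.2) &
      continuous inv].

Definition is_profinite_group {T : topologicalType}
  (mul : T -> T -> T) (one : T) (inv : T -> T) :=
  [/\ is_topological_group mul one inv,
      compact [set: T],
      hausdorff_space T &
      totally_disconnected [set: T]].

Definition is_subgroup {T : Type} (mul : T -> T -> T) (one : T) (inv : T -> T)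
  (U : set T) :=
  [/\ U one, (forall x y, U x -> U y -> U (mul x y)) & (forall x, U x -> U (inv x))].

Definition lcoset {T : Type} (mul : T -> T -> T) (x : T) (U : set T) : set T :=
  [set mul x u | u in U].

Definition has_index {T : Type} (mul : T -> T -> T) (U : set T) (n : nat) :=
  [set lcoset mul x U | x in [set: T]] #= `I_n.

Definition open_subgroups_of_index {T : topologicalType}
  (mul : T -> T -> T) (one : T) (inv : T -> T) (n : nat) : set (set T) :=
  [set U | [/\ is_subgroup mul one inv U, open U & has_index mul U n]].

(* Continuity of a map into a finite group carrying the discrete topology. *)
Definition continuous_to_discrete {T : topologicalType} {V : Type} (f : T -> V) :=
  forall v : V, open (f @^-1` [set v]).

Definition top_group_isomorphic {T : topologicalType} (mul : T -> T -> T)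
  (A B : set T) :=
  exists (f g : T -> T),
    [/\ (forall x, A x -> B (f x)),
        (forall y, B y -> A (g y)),
        (forall x, A x -> g (f x) = x) &
        (forall y, B y -> f (g y) = y)] /\
    [/\ (forall x y, A x -> A y -> f (mul x y) = mul (f x) (f y)),
        {within A, continuous f} &
        {within B, continuous g}].

(* Write A, B for the preimages of G1, G2 and A_m, B_m for the intersections of the
   open subgroups of index at most m in A, B.  The finiteness hypothesis makes A_m, B_m
   open; they are normal, preserved by isomorphisms, and shrink to the identity since the
   group is profinite.  If no finite quotient separated G1 and G2, then the quotient by
   the open normal core of A_m `&` B_m `&` ker phi would give an isomorphism of A and B
   modulo subgroups of A_m and B_m, hence an isomorphism A / A_m ~ B / B_m.  These form
   finite nonempty sets compatible with passing from m + 1 to m, so Koenig's lemma yields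
   a coherent sequence of them, and its limit is an isomorphism of topological groups
   from A onto B. *)

From Pilot Require Import Defs.
From HB Require Import structures.
From mathcomp Require Import all_boot all_order all_algebra all_fingroup.
From mathcomp Require Import all_classical all_reals all_analysis.
From mathcomp Require Import finmap zify.
Set Implicit Arguments. Unset Strict Implicit. Unset Printing Implicit Defensive.
Local Open Scope classical_set_scope.
Local Open Scope card_scope.

Lemma nonincreasing_setsP (X : Type) (G : nat -> set X) :
  (forall k, G k.+1 `<=` G k) -> forall m n, (m <= n)%N -> G n `<=` G m.
Proof.
move=> GS m n /subnK <-; elim: (n - m)%N => [//|k IH].
by rewrite addSn => x /GS /IH.
Qed.

Lemma finite_nat_ub (A : set nat) : finite_set A -> exists K, forall n, A n -> (n <= K)%N.
Proof.
move=> /finite_fsetP [X ->]; exists (\max_(i <- X) i)%N => n /= nX.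
exact: leq_bigmax_seq.
Qed.

Lemma nonincreasing_finite_meet (X : Type) (F : set X) (G : nat -> set X) :
  finite_set F -> (forall k, G k `<=` F) -> (forall k, G k.+1 `<=` G k) ->
  (forall k, G k !=set0) -> exists x, forall k, G k x.
Proof.
move=> finF GF GS G0; apply: contrapT => noG.
have /choice [k kP] : forall x, exists k, ~ G k x.
  by move=> x; apply: contrapT => /forallNP Gx; apply: noG; exists x => n; apply: contrapT.
have [K kK] := finite_nat_ub (finite_image k finF).
have [x GKx] := G0 K.
by apply: (kP x); apply: (nonincreasing_setsP GS (kK _ _) GKx); exists x => //; apply: GF GKx.
Qed.

Lemma finite_powerset (K : choiceType) (X : set K) :
  finite_set X -> finite_set [set Y | Y `<=` X].
Proof.
move=> /finite_fsetP [F ->].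
apply: (@sub_finite_set _ _ ((fun G : {fset K} => [set` G]) @` [set` fpowerset F])); last first.
  exact: finite_image (finite_fset _).
move=> Y YF; exists [fset y in F | `[< Y y >]]%fset.
  by rewrite /= fpowersetE; apply/fsubsetP => y; rewrite !inE => /andP[].
apply/seteqP; split => z /=; rewrite !inE; first by case/andP => _ /asboolP.
by move=> Yz; apply/andP; split; [exact: YF | exact/asboolP].
Qed.

Section InverseLimit.
Variables (X : Type) (S : nat -> set X) (r : nat -> X -> X).
Hypotheses (S_finite : forall m, finite_set (S m)) (S_neq0 : forall m, S m !=set0).
Hypothesis r_S : forall m x, S m.+1 x -> S m (r m x).

Fixpoint descend m k x := if k is k'.+1 then r m (descend m.+1 k' x) else x.

Let liftable m k := descend m k @` S (m + k).

Let liftable_sub k : forall m, liftable m k `<=` S m.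
Proof.
elim: k => [|k IH] m _ [x Sx <-] /=; first by rewrite addn0 in Sx.
by apply/r_S/(IH m.+1); exists x; rewrite // addSnnS.
Qed.

Let liftableS k : forall m, liftable m k.+1 `<=` liftable m k.
Proof.
elim: k => [|k IH] m _ [x Sx <-].
  by exists (r m x); rewrite // addn0; apply: r_S; rewrite -addn1.
have /IH [x' Sx' e] : liftable m.+1 k.+1 (descend m.+1 k.+1 x).
  by exists x; rewrite // addSnnS.
by exists x'; rewrite -?addSnnS //= e.
Qed.

Let liftable_neq0 m k : liftable m k !=set0.
Proof. by have [x Sx] := S_neq0 (m + k); exists (descend m k x), x. Qed.

(* Such points exist at each level by finiteness, and each lifts to one at the next level. *)
Let universal m x := forall k, liftable m k x.

Let universal_lift m x : universal m x -> exists y, universal m.+1 y /\ r m y = x.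
Proof.
move=> ux; pose G k y := liftable m.+1 k y /\ r m y = x.
have [|k y [/liftableS]|k|y Gy] := @nonincreasing_finite_meet _ (S m.+1) G (S_finite _).
- by move=> k y [/liftable_sub].
- by [].
- have [z Sz e] := ux k.+1.
  by exists (descend m.+1 k z); split => //; exists z; rewrite // addSnnS.
- by exists y; split => [k|]; [case: (Gy k) | case: (Gy 0%N)].
Qed.

Lemma inverse_limit_neq0 : exists u : nat -> X, forall m, S m (u m) /\ r m (u m.+1) = u m.
Proof.
have [x0 ux0] : exists x, universal 0 x.
  exact: nonincreasing_finite_meet (S_finite 0) (liftable_sub ^~ 0) (liftableS ^~ 0)
    (liftable_neq0 0).
have /choice [f fP] : forall p : nat * X, exists y,
    universal p.1 p.2 -> universal p.1.+1 y /\ r p.1 y = p.2.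
  move=> [m x]; have [/universal_lift [y ?]|nux] := pselect (universal m x).
    by exists y.
  by exists x.
pose fix u m := if m is m'.+1 then f (m', u m') else x0.
have uu m : universal m (u m) by elim: m => [//|m IH]; case: (fP (m, u m) IH).
exists u => m; split; first exact: liftable_sub (uu m 0%N).
by case: (fP (m, u m) (uu m)).
Qed.

End InverseLimit.

(* [compact_cover] is stated for pointed spaces only. *)
Definition pointed_at (T : topologicalType) (x : T) : Type := T.
HB.instance Definition _ (T : topologicalType) (x : T) := Topological.on (pointed_at x).
HB.instance Definition _ (T : topologicalType) (x : T) := isPointed.Build (pointed_at x) x.

Section CompactSpace.
Variable T : topologicalType.

Lemma open_finite_bigcap (I : choiceType) (D : set I) (f : I -> set T) :
  finite_set D -> (forall i, D i -> open (f i)) -> open (\bigcap_(i in D) f i).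
Proof.
move=> finD oF; rewrite -bigsetI_fset_set // big_seq.
apply: big_ind => [|U V|i]; [exact: openT | exact: openI |].
by rewrite in_fset_set // in_setE; apply: oF.
Qed.

Hypothesis cT : compact [set: T].

Lemma compact_finite_subcover (I : choiceType) (D : set I) (f : I -> set T) :
  (forall i, D i -> open (f i)) -> (forall x, exists2 i, D i & f i x) ->
  exists D' : {fset I}, [set` D'] `<=` D /\ forall x, exists2 i, i \in D' & f i x.
Proof.
move=> oF cov; have [[x0 _]|T0] := pselect (exists x : T, True); last first.
  by exists fset0; split => // x; case: T0; exists x.
have cT' : cover_compact [set: pointed_at x0] by rewrite -compact_cover.
have [D' sD' cD'] := cT' I D f oF (fun x _ => cov x).
exists D'; split => [i /sD' /set_mem //|x].
by have [i /= ? ?] := cD' x Logic.I; exists i.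
Qed.

Lemma compact_nonincreasing_meet (F : nat -> set T) :
  (forall n, closed (F n)) -> (forall n, F n.+1 `<=` F n) -> (forall n, F n !=set0) ->
  exists z, forall n, F n z.
Proof.
move=> cF FS F0; apply: contrapT => noF.
have [||D' [_ cD']] := @compact_finite_subcover _ setT (fun n => ~` F n).
- by move=> n _; apply: closed_openC.
- move=> x; apply: contrapT => nFx; apply: noF; exists x => n.
  by apply: contrapT => Fnx; apply: nFx; exists n.
have [z Fz] := F0 (\max_(i <- D') i)%N.
have [i iD'] := cD' z; apply; move: Fz; apply: nonincreasing_setsP => //.
exact: leq_bigmax_seq.
Qed.

Lemma compact_bigcap_sub_open (I : choiceType) (D : set I) (f : I -> set T) (W : set T) :
  (forall i, D i -> closed (f i)) -> open W -> \bigcap_(i in D) f i `<=` W ->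
  exists D' : {fset I}, [set` D'] `<=` D /\ \bigcap_(i in [set` D']) f i `<=` W.
Proof.
move=> cF oW DW; have [[i0 Di0]|D0] := pselect (D !=set0); last first.
  exists fset0; split => // x _; apply: DW => i Di.
  by case: D0; exists i.
have [|x|D' [sD' cD']] := @compact_finite_subcover _ D (fun i => W `|` ~` f i).
- by move=> i Di; apply: openU => //; apply/closed_openC/cF.
- have [Wx|nWx] := pselect (W x); first by exists i0 => //; left.
  apply: contrapT => nex; apply: nWx; apply: DW => i Di.
  by apply: contrapT => nfx; apply: nex; exists i => //; right.
exists D'; split => // x fx; have [i iD' [//|]] := cD' x.
by case; apply: fx.
Qed.

Hypothesis hT : hausdorff_space T.

Lemma compact_separate_closed (P1 P2 : set T) :
  closed P1 -> closed P2 -> P1 `&` P2 = set0 ->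
  exists U1 U2, [/\ open U1, open U2, P1 `<=` U1, P2 `<=` U2 & U1 `&` U2 = set0].
Proof.
move=> c1 c2 P12.
have P1P2 : set_nbhs P1 (~` P2).
  apply/set_nbhsP; exists (~` P2); split => //; first exact: closed_openC.
  by move=> z P1z P2z; have : (P1 `&` P2) z by []; rewrite P12.
have [V /set_nbhsP [C [oC P1C CV]] clV] := compact_normal hT cT c1 P1P2.
exists C, (~` closure V); split => //.
- exact/closed_openC/closed_closure.
- by move=> z P2z clz; apply: (clV z clz).
- by apply/seteqP; split => // z [Cz]; apply; apply/subset_closure/CV.
Qed.

Definition quasi_component (x : T) := \bigcap_(C in [set C | clopen C /\ C x]) C.

Lemma quasi_component_refl x : quasi_component x x.
Proof. by move=> C []. Qed.

Lemma quasi_component_closed x : closed (quasi_component x).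
Proof. by apply: closed_bigI => C [[]]. Qed.

(* Finitely many clopen neighbourhoods of [x] already meet inside [U1 `|` U2]; cutting their
   intersection by [U1] gives a clopen neighbourhood of [x] avoiding [P2]. *)
Lemma quasi_component_split x (P1 P2 : set T) :
  closed P1 -> closed P2 -> P1 `&` P2 = set0 ->
  quasi_component x `<=` P1 `|` P2 -> P1 x -> quasi_component x `<=` P1.
Proof.
move=> c1 c2 P12 QP P1x.
have [U1 [U2 [oU1 oU2 PU1 PU2 U12]]] := compact_separate_closed c1 c2 P12.
have [|||D' [sD' EU]] := @compact_bigcap_sub_open _ [set C | clopen C /\ C x] id (U1 `|` U2).
- by move=> C [[]].
- exact: openU.
- by move=> z /QP [/PU1|/PU2] ?; [left|right].
pose E := \bigcap_(C in [set` D']) C.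
have EU1 : clopen (E `&` U1).
  have oE : open E.
    by apply: open_finite_bigcap; [exact: finite_fset | move=> C /sD' [[]]].
  split; first exact: openI.
  have -> : E `&` U1 = E `&` ~` U2.
    apply/seteqP; split => z [Ez Uz]; split => //.
      by move=> U2z; have : (U1 `&` U2) z by []; rewrite U12.
    by case: (EU z Ez).
  by apply: closedI; [apply: closed_bigI => C /sD' [[]] | exact: open_closedC].
move=> z Qz; have [//|P2z] := QP z Qz.
have [_ U1z] : (E `&` U1) z by apply: Qz; split=> //; split; [move=> C /sD' [] | exact: PU1].
have : (U1 `&` U2) z by split=> //; exact: PU2.
by rewrite U12.
Qed.

Lemma quasi_component_connected x : connected (quasi_component x).
Proof.
move=> B [b Bb] [U oU BU] [C cC BC].
have cB : closed B by rewrite BC; apply: closedI => //; exact: quasi_component_closed.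
have cQU : closed (quasi_component x `&` ~` U).
  by apply: closedI; [exact: quasi_component_closed | exact: open_closedC].
have BQU : B `&` (quasi_component x `&` ~` U) = set0.
  by apply/seteqP; split => // z [+ [_ nUz]]; rewrite BU => -[].
have QBU : quasi_component x `<=` B `|` (quasi_component x `&` ~` U).
  by move=> z Qz; have [Uz|nUz] := pselect (U z); [left; rewrite BU | right].
have [Bx|nBx] := pselect (B x).
  apply/seteqP; split; first by rewrite BU => z [].
  exact: quasi_component_split cB cQU BQU QBU Bx.
have QUx : (quasi_component x `&` ~` U) x.
  split; first exact: quasi_component_refl.
  by move=> Ux; apply: nBx; rewrite BU; split=> //; exact: quasi_component_refl.
rewrite setIC in BQU; rewrite setUC in QBU.
have QU := quasi_component_split cQU cB BQU QBU QUx.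
have [Qb Ub] : (quasi_component x `&` U) b by rewrite -BU.
by have [_] := QU b Qb.
Qed.

Lemma compact_totally_disconnected_zero_dimensional :
  totally_disconnected [set: T] -> zero_dimensional T.
Proof.
move=> tdT x y /eqP xy; apply: contrapT => nsep; apply: xy.
have Qy : quasi_component x y.
  move=> C [clC Cx]; apply: contrapT => nCy; apply: nsep; exists C; split => //.
have := connected_component_max Qy (@subsetT _ _) (@quasi_component_connected x).
by rewrite tdT // => /(_ _ (@quasi_component_refl x)) ->.
Qed.

End CompactSpace.

Lemma continuous_to_discrete_open (T : topologicalType) (V : Type) (f : T -> V) (X : set V) :
  continuous_to_discrete f -> open (f @^-1` X).
Proof.
move=> fc; have -> : f @^-1` X = \bigcup_(v in X) f @^-1` [set v].
  by apply/seteqP; split => [x Xx|x [v Xv /= ->//]]; exists (f x).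
by apply: bigcup_open => v _; apply: fc.
Qed.

Section TopologicalGroup.
Variables (T : topologicalType) (mul : T -> T -> T) (one : T) (inv : T -> T).
Hypothesis Hgrp : is_group mul one inv.

Local Notation subgroup := (is_subgroup mul one inv).
Local Notation lcos := (Defs.lcoset mul).

Lemma tmulgA x y z : mul x (mul y z) = mul (mul x y) z. Proof. by case: Hgrp. Qed.
Lemma tmul1g x : mul one x = x. Proof. by case: Hgrp. Qed.
Lemma tmulg1 x : mul x one = x. Proof. by case: Hgrp. Qed.
Lemma tmulVg x : mul (inv x) x = one. Proof. by case: Hgrp. Qed.
Lemma tmulgV x : mul x (inv x) = one. Proof. by case: Hgrp. Qed.
Lemma tmulKg x y : mul (inv x) (mul x y) = y. Proof. by rewrite tmulgA tmulVg tmul1g. Qed.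
Lemma tmulKVg x y : mul x (mul (inv x) y) = y. Proof. by rewrite tmulgA tmulgV tmul1g. Qed.
Lemma tmulgK x y : mul (mul y x) (inv x) = y. Proof. by rewrite -tmulgA tmulgV tmulg1. Qed.
Lemma tmulgKV x y : mul (mul y (inv x)) x = y. Proof. by rewrite -tmulgA tmulVg tmulg1. Qed.

Lemma tinvg_unique x y : mul x y = one -> y = inv x.
Proof. by move=> xy1; rewrite -(tmulKg x y) xy1 tmulg1. Qed.

Lemma tinvgK x : inv (inv x) = x.
Proof. by apply/esym/tinvg_unique; rewrite tmulVg. Qed.
Lemma tinvMg x y : inv (mul x y) = mul (inv y) (inv x).
Proof. by apply/esym/tinvg_unique; rewrite tmulgA tmulgK tmulgV. Qed.
Lemma tinvg1 : inv one = one.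
Proof. by apply/esym/tinvg_unique; rewrite tmulg1. Qed.

Lemma subgroup1 U : subgroup U -> U one. Proof. by case. Qed.
Lemma subgroupM U x y : subgroup U -> U x -> U y -> U (mul x y).
Proof. by case=> _ UM _; apply: UM. Qed.
Lemma subgroupV U x : subgroup U -> U x -> U (inv x).
Proof. by case=> _ _ UV; apply: UV. Qed.

Lemma subgroupT : subgroup setT. Proof. by []. Qed.

Lemma subgroupI U V : subgroup U -> subgroup V -> subgroup (U `&` V).
Proof.
move=> sU sV; split; first by split; apply: subgroup1.
  by move=> x y [Ux Vx] [Uy Vy]; split; apply: subgroupM.
by move=> x [Ux Vx]; split; apply: subgroupV.
Qed.

Lemma lcosetE x U y : lcos x U y <-> U (mul (inv x) y).
Proof.
split; first by case=> u Uu <-; rewrite tmulKg.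
by move=> Uxy; exists (mul (inv x) y); rewrite ?tmulKVg.
Qed.

Lemma lcoset_refl U x : subgroup U -> lcos x U x.
Proof. by move=> sU; apply/lcosetE; rewrite tmulVg; apply: subgroup1. Qed.

Lemma lcoset_eq U x y : subgroup U -> U (mul (inv y) x) -> lcos x U = lcos y U.
Proof.
move=> sU Uyx; have Uxy : U (mul (inv x) y) by have := subgroupV sU Uyx; rewrite tinvMg tinvgK.
apply/seteqP; split => z /lcosetE Uz; apply/lcosetE.
  by rewrite -(tmulKVg x z) tmulgA; apply: subgroupM.
by rewrite -(tmulKVg y z) tmulgA; apply: subgroupM.
Qed.

Lemma lcosetM a b U : lcos a (lcos b U) = lcos (mul a b) U.
Proof.
apply/seteqP; split => z; first by case=> _ [u Uu <-] <-; exists u; rewrite ?tmulgA.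
by case=> u Uu <-; exists (mul b u); [exists u | rewrite tmulgA].
Qed.

Lemma lcoset1 U : lcos one U = U.
Proof.
apply/seteqP; split => z; first by case=> u Uu <-; rewrite tmul1g.
by move=> Uz; exists z; rewrite ?tmul1g.
Qed.

Definition tconjg a y := mul a (mul y (inv a)).

Lemma tconjgM a x y : tconjg a (mul x y) = mul (tconjg a x) (tconjg a y).
Proof. by rewrite /tconjg !tmulgA tmulgKV. Qed.
Lemma tconjgV a x : tconjg a (inv x) = inv (tconjg a x).
Proof. by rewrite /tconjg !tinvMg tinvgK !tmulgA. Qed.
Lemma tconjgK a x : tconjg (inv a) (tconjg a x) = x.
Proof. by rewrite /tconjg tinvgK !tmulgA tmulVg tmul1g tmulgKV. Qed.
Lemma tconjgKV a x : tconjg a (tconjg (inv a) x) = x.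
Proof. by have := tconjgK (inv a) x; rewrite tinvgK. Qed.
Lemma tconjg1 a : tconjg a one = one.
Proof. by rewrite /tconjg tmul1g tmulgV. Qed.

Section MorphismToFinGroup.
Variables (gT : finGroupType) (f : T -> gT).
Hypothesis fM : {morph f : x y / mul x y >-> (x * y)%g}.

Lemma tmorph1 : f one = 1%g.
Proof. by apply: (@mulgI _ (f one)); rewrite mulg1 -fM tmul1g. Qed.

Lemma tmorphV x : f (inv x) = (f x)^-1%g.
Proof. by apply: (@mulgI _ (f x)); rewrite -fM tmulgV tmorph1 mulgV. Qed.

Lemma tmorph_eq x x0 : f x = f x0 <-> f (mul (inv x0) x) = 1%g.
Proof.
rewrite fM tmorphV; split => [->|fx]; first by rewrite mulVg.
by rewrite -(mulKVg (f x0) (f x)) fx mulg1.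
Qed.

Lemma subgroup_preim (H : {group gT}) : subgroup (f @^-1` [set g | g \in H]).
Proof.
split => /=; first by rewrite tmorph1 group1.
  by move=> x y Hx Hy; rewrite fM groupM.
by move=> x Hx; rewrite tmorphV groupV.
Qed.

Lemma subgroup_ker : subgroup (f @^-1` [set 1%g]).
Proof.
split => /= [|x y fx fy|x fx]; first exact: tmorph1.
  by rewrite fM fx fy mulg1.
by rewrite tmorphV fx invg1.
Qed.

End MorphismToFinGroup.

(* For subgroups, [index_le S V m] says that [S `&` V] has index at most [m] in [S]. *)
Definition index_le (S V : set T) (m : nat) := exists s : nat -> T, (forall i, S (s i)) /\
  forall x, S x -> exists2 i, (i < m)%N & V (mul (inv (s i)) x).

Lemma index_le_trans S V a m : index_le setT S a -> index_le S V m ->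
  index_le setT V (a * m).
Proof.
move=> [t [_ tS]] [s [Ss sV]].
exists (fun k => mul (t (k %/ m)%N) (s (k %% m)%N)); split => // x _.
have [j ja Sx] := tS x Logic.I; have [i im Vx] := sV _ Sx.
have m0 : (0 < m)%N := leq_ltn_trans (leq0n i) im.
exists (j * m + i)%N; first by nia.
rewrite divnMDl // divn_small // addn0 modnMDl modn_small //.
by rewrite tinvMg -tmulgA.
Qed.

Lemma lcosets_card_le V m : subgroup V -> index_le setT V m ->
  [set lcos x V | x in setT] #<= `I_m.
Proof.
move=> sV [s [_ sVx]].
have sub : [set lcos x V | x in setT] `<=` (fun j => lcos (s j) V) @` `I_m.
  move=> _ [x _ <-]; have [j jm Vx] := sVx x Logic.I.
  by exists j => //; apply/esym/lcoset_eq.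
exact: card_le_trans (subset_card_le sub) (card_image_le _ _).
Qed.

Lemma index_le_has_index V m : subgroup V -> index_le setT V m ->
  exists2 n, (0 < n <= m)%N & has_index mul V n.
Proof.
move=> sV Vm; have Vle := lcosets_card_le sV Vm.
have /finite_setP [n Vn] : finite_set [set lcos x V | x in setT].
  by apply/finite_set_leP; exists m.
exists n => //; apply/andP; split.
  rewrite lt0n; apply/negP => /eqP n0; move: Vn; rewrite n0 II0 card_eq0 => /eqP V0.
  have : [set lcos x V | x in setT] (lcos one V) by exists one.
  by rewrite V0.
by move: Vn; rewrite card_eq_le -card_le_II => /andP[_ /card_le_trans]; apply.
Qed.

(* The graph of an isomorphism [A / A' ~ B / B'], lifted to a saturated relation on [A * B]. *)
Record quotient_iso (A B A' B' : set T) (R : T -> T -> Prop) : Prop := QuotientIso {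
  qiso_dom : forall x y, R x y -> A x /\ B y;
  qiso_total : forall x, A x -> exists y, R x y;
  qiso_onto : forall y, B y -> exists x, R x y;
  qiso_mul : forall x y x' y', R x y -> R x' y' -> R (mul x x') (mul y y');
  qiso_inv : forall x y, R x y -> R (inv x) (inv y);
  qiso_ker : forall x y, R x y -> (A' x <-> B' y);
  qiso_sat : forall x y a b, R x y -> A' a -> B' b -> R (mul x a) (mul y b) }.

Lemma quotient_iso_sym A B A' B' R :
  quotient_iso A B A' B' R -> quotient_iso B A B' A' (fun y x => R x y).
Proof.
case=> Rdom Rtot Ronto RM RV Rker Rsat; split.
- by move=> y x /Rdom [].
- exact: Ronto.
- exact: Rtot.
- by move=> y x y' x' r r'; apply: RM.
- by move=> y x r; apply: RV.
- by move=> y x r; apply: iff_sym; apply: Rker.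
- by move=> y x b a r B'b A'a; apply: Rsat.
Qed.

Section QuotientIsoTheory.
Variables (A B A' B' : set T) (R : T -> T -> Prop).
Hypothesis qR : quotient_iso A B A' B' R.

Lemma quotient_iso11 : subgroup A -> subgroup A' -> subgroup B' -> R one one.
Proof.
move=> sA sA' sB'; have [y Ry] := qiso_total qR (subgroup1 sA).
have B'y : B' y by apply/(qiso_ker qR Ry); exact: subgroup1.
by have := qiso_sat qR Ry (subgroup1 sA') (subgroupV sB' B'y); rewrite tmulg1 tmulgV.
Qed.

Lemma quotient_iso_uniqr x y y' : subgroup A' -> R x y -> R x y' -> B' (mul (inv y) y').
Proof.
move=> sA' Rxy Rxy'; have := qiso_mul qR (qiso_inv qR Rxy) Rxy'.
by rewrite tmulVg => /(qiso_ker qR) <-; exact: subgroup1.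
Qed.

End QuotientIsoTheory.

Lemma quotient_iso_of_isog (hT : finGroupType) (psi : T -> hT) (H1 H2 : {group hT})
    (f : {morphism H1 >-> hT}) :
  {morph psi : x y / mul x y >-> (x * y)%g} -> (forall h, exists x, psi x = h) ->
  ('injm f)%g -> (f @* H1)%g = H2 ->
  quotient_iso (psi @^-1` [set h | h \in H1]) (psi @^-1` [set h | h \in H2])
    (psi @^-1` [set 1%g]) (psi @^-1` [set 1%g])
    (fun x y => [/\ psi x \in H1, psi y \in H2 & f (psi x) = psi y]).
Proof.
move=> psiM psi_onto injf fH1; split.
- by move=> x y [].
- move=> x H1x; have [y fxy] := psi_onto (f (psi x)).
  by exists y; split; rewrite // fxy -fH1 mem_morphim.
- move=> y H2y; have := H2y; rewrite /= -fH1 => /morphimP [h _ H1h fh].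
  by have [x xh] := psi_onto h; exists x; split; rewrite ?xh ?fh ?mem_morphim.
- move=> x y x' y' [H1x H2y fxy] [H1x' H2y' fxy'].
  by split; rewrite !psiM ?groupM // morphM // fxy fxy'.
- move=> x y [H1x H2y fxy].
  by split; rewrite !(tmorphV psiM) ?groupV // morphV // fxy.
- move=> x y [H1x H2y fxy] /=.
  by rewrite -fxy; split => [->|/eqP]; [rewrite morph1 | rewrite morph_injm_eq1 // => /eqP].
- move=> x y a b [H1x H2y fxy] /= psia psib.
  by split; rewrite !psiM ?psia ?psib ?mulg1.
Qed.

Section Continuity.
Hypotheses (mul_cont : continuous (fun p : T * T => mul p.1 p.2)) (inv_cont : continuous inv).

Lemma open_lmul x U : open U -> open (mul x @^-1` U).
Proof.
move=> oU; apply: open_comp => // y _.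
apply: (@cvg_comp _ _ _ (fun y => (x, y)) (fun p : T * T => mul p.1 p.2) (nbhs y) (nbhs (x, y))).
  by apply: cvg_pair; [exact: cvg_cst | exact: cvg_id].
exact: (@mul_cont (x, y)).
Qed.

Lemma closed_lmul x C : closed C -> closed (mul x @^-1` C).
Proof.
by move=> cC; rewrite -[C]setCK -preimage_setC; apply/open_closedC/open_lmul/closed_openC.
Qed.

Lemma open_rmul x U : open U -> open (mul^~ x @^-1` U).
Proof.
move=> oU; apply: open_comp => // y _.
apply: (@cvg_comp _ _ _ (fun y => (y, x)) (fun p : T * T => mul p.1 p.2) (nbhs y) (nbhs (y, x))).
  by apply: cvg_pair; [exact: cvg_id | exact: cvg_cst].
exact: (@mul_cont (y, x)).
Qed.

Lemma open_inv U : open U -> open (inv @^-1` U).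
Proof. by move=> oU; apply: open_comp => // y _; exact: inv_cont. Qed.

Lemma open_lcoset x U : open U -> open (lcos x U).
Proof.
move=> oU; have -> : lcos x U = mul (inv x) @^-1` U by apply/seteqP; split => y /lcosetE.
exact: open_lmul.
Qed.

Lemma open_of_lcosets U S : open U -> U one -> (forall x, S x -> lcos x U `<=` S) -> open S.
Proof.
move=> oU U1 SU; have -> : S = \bigcup_(x in S) lcos x U.
  apply/seteqP; split => [x Sx|y [x Sx]]; last exact: SU.
  by exists x => //; apply/lcosetE; rewrite tmulVg.
by apply: bigcup_open => x _; exact: open_lcoset.
Qed.

Lemma open_subgroup_closed U : subgroup U -> open U -> closed U.
Proof.
move=> sU oU; have -> : U = ~` \bigcup_(x in ~` U) lcos x U.
  apply/seteqP; split => [y Uy [x nUx /lcosetE Uxy]|y nUy].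
    by apply: nUx; have := subgroupM sU Uy (subgroupV sU Uxy); rewrite tinvMg tinvgK tmulKVg.
  by apply: contrapT => nUy'; apply: nUy; exists y => //; exact: lcoset_refl.
by apply/open_closedC/bigcup_open => x _; exact: open_lcoset.
Qed.

Definition open_subgroups_index_le (S : set T) (m : nat) :=
  [set V | [/\ subgroup V, open V, V `<=` S & index_le S V m]].

Definition index_core (S : set T) (m : nat) := \bigcap_(V in open_subgroups_index_le S m) V.

Lemma index_core_sub S m V : open_subgroups_index_le S m V -> index_core S m `<=` V.
Proof. by move=> SV x; apply. Qed.

Lemma index_core_subgroup S m : subgroup (index_core S m).
Proof.
split; first by move=> V [sV _ _ _]; exact: subgroup1.
  by move=> x y Sx Sy V SV; case: (SV) => sV _ _ _; apply: subgroupM sV (Sx V SV) (Sy V SV).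
by move=> x Sx V SV; case: (SV) => sV _ _ _; apply: subgroupV sV (Sx V SV).
Qed.

Lemma index_core_mono S m n : (m <= n)%N -> index_core S n `<=` index_core S m.
Proof.
move=> mn x Sx V [sV oV VS [s [Ss sV']]]; apply: Sx; split => //.
by exists s; split => // y /sV' [i im Vy]; exists i; rewrite ?(leq_trans im).
Qed.

Lemma index_core_subS S m : subgroup S -> open S -> (0 < m)%N -> index_core S m `<=` S.
Proof.
move=> sS oS m0; apply: index_core_sub; split => //.
exists (fun _ => one); split => [_|x Sx]; first exact: subgroup1.
by exists 0%N; rewrite ?tinvg1 ?tmul1g.
Qed.

Lemma index_core_conj S m a x :
  subgroup S -> S a -> index_core S m x -> index_core S m (tconjg a x).
Proof.
move=> sS Sa Sx V [sV oV VS [s [Ss sVS]]].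
have Sconj b y : S b -> S y -> S (tconjg b y).
  by move=> Sb Sy; apply: subgroupM sS Sb (subgroupM sS Sy (subgroupV sS Sb)).
apply: (Sx [set y | V (tconjg a y)]); split.
- split; first by rewrite /= tconjg1; exact: subgroup1.
    by move=> y z Vy Vz; rewrite /= tconjgM; exact: subgroupM.
  by move=> y Vy; rewrite /= tconjgV; exact: subgroupV.
- have -> : [set y | V (tconjg a y)] = mul^~ (inv a) @^-1` (mul a @^-1` V) by [].
  by apply/open_rmul/open_lmul.
- move=> y /VS Sy; rewrite -(tconjgK a y).
  by apply: Sconj => //; exact: subgroupV.
- exists (fun i => tconjg (inv a) (s i)); split => [i|y Sy].
    by apply: Sconj; [exact: subgroupV | exact: Ss].
  have [i im Vi] := sVS _ (Sconj _ _ Sa Sy); exists i => //.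
  by rewrite /= tconjgM tconjgV tconjgKV.
Qed.

Lemma index_core_lcosetM S m x0 x x1 x' : subgroup S -> S x1 ->
  index_core S m (mul (inv x0) x) -> index_core S m (mul (inv x1) x') ->
  index_core S m (mul (inv (mul x0 x1)) (mul x x')).
Proof.
move=> sS Sx1 Sx Sx'.
have -> : mul (inv (mul x0 x1)) (mul x x') =
    mul (tconjg (inv x1) (mul (inv x0) x)) (mul (inv x1) x').
  by rewrite /tconjg tinvgK tinvMg !tmulgA tmulgK.
apply: subgroupM (index_core_subgroup S m) _ Sx'.
by apply: index_core_conj Sx => //; exact: subgroupV.
Qed.

Lemma index_core_lcosetV S m x0 x : subgroup S -> S x0 ->
  index_core S m (mul (inv x0) x) -> index_core S m (mul (inv (inv x0)) (inv x)).
Proof.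
move=> sS Sx0 Sx.
have -> : mul (inv (inv x0)) (inv x) = tconjg x0 (inv (mul (inv x0) x)).
  by rewrite /tconjg tinvMg !tinvgK !tmulgA tmulgK.
by apply: index_core_conj => //; exact: subgroupV (index_core_subgroup S m) Sx.
Qed.

(* The pullback along [R] of an open subgroup of index at most [m] in [B] is one in [A]. *)
Lemma quotient_iso_index_core A B A' B' R m : quotient_iso A B A' B' R ->
  subgroup A -> subgroup A' -> subgroup B' -> open A' -> B' `<=` index_core B m ->
  forall x y, R x y -> index_core A m x -> index_core B m y.
Proof.
move=> qR sA sA' sB' oA' B'core x y Rxy Ax V BV.
case: (BV) => sV oV VB [s [Bs sVB]].
pose V' := [set u | exists2 v, V v & R u v].
have [y' Vy' Rxy'] : V' x.
  apply: Ax; split.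
  - split; first by exists one; [exact: subgroup1 | exact: quotient_iso11 qR sA sA' sB'].
      move=> u u' [v Vv Ruv] [v' Vv' Ruv'].
      by exists (mul v v'); last exact: (qiso_mul qR Ruv Ruv'); exact: subgroupM.
    move=> u [v Vv Ruv].
    by exists (inv v); last exact: (qiso_inv qR Ruv); exact: subgroupV.
  - apply: (@open_of_lcosets A') => // [|u [v Vv Ruv] z /lcosetE A'z]; first exact: subgroup1.
    by exists v => //; have := qiso_sat qR Ruv A'z (subgroup1 sB'); rewrite tmulKVg tmulg1.
  - by move=> u [v _ /(qiso_dom qR) []].
  - have /choice [r rP] : forall i, exists u, R u (s i) by move=> i; exact: (qiso_onto qR (Bs i)).
    exists r; split => [i|u Au]; first by case: (qiso_dom qR (rP i)).
    have [v Ruv] := qiso_total qR Au; have [_ Bv] := qiso_dom qR Ruv.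
    have [i im Vv] := sVB v Bv; exists i => //.
    by exists (mul (inv (s i)) v) => //; exact: (qiso_mul qR (qiso_inv qR (rP i)) Ruv).
have := B'core _ (quotient_iso_uniqr qR sA' Rxy' Rxy) V BV.
by move=> /(subgroupM sV Vy'); rewrite tmulKVg.
Qed.

Section Coarsen.
Variables (A B A' B' : set T) (R : T -> T -> Prop) (m : nat).
Hypothesis qR : quotient_iso A B A' B' R.
Hypotheses (sA : subgroup A) (sB : subgroup B) (sA' : subgroup A') (sB' : subgroup B').
Hypotheses (oA : open A) (oB : open B) (oA' : open A') (oB' : open B') (m_gt0 : (0 < m)%N).
Hypotheses (A'core : A' `<=` index_core A m) (B'core : B' `<=` index_core B m).

(* The isomorphism [A / A_m ~ B / B_m] induced by [R]. *)
Definition coarsen x y := exists x0 y0,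
  [/\ R x0 y0, index_core A m (mul (inv x0) x) & index_core B m (mul (inv y0) y)].

Lemma coarsen_quotient_iso : quotient_iso A B (index_core A m) (index_core B m) coarsen.
Proof.
have sAm := index_core_subgroup A m; have sBm := index_core_subgroup B m.
have AmA := index_core_subS sA oA m_gt0; have BmB := index_core_subS sB oB m_gt0.
have qR' := quotient_iso_sym qR.
have core_fwd := quotient_iso_index_core qR sA sA' sB' oA' B'core.
have core_bwd := quotient_iso_index_core qR' sB sB' sA' oB' A'core.
have refl x y : R x y -> coarsen x y.
  by move=> Rxy; exists x, y; split; rewrite // tmulVg; exact: subgroup1.
split.
- move=> x y [x0 [y0 [/(qiso_dom qR) [Ax0 By0] Ax By]]]; split.
    by rewrite -(tmulKVg x0 x); exact: subgroupM sA Ax0 (AmA _ Ax).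
  by rewrite -(tmulKVg y0 y); exact: subgroupM sB By0 (BmB _ By).
- by move=> x /(qiso_total qR) [y /refl]; exists y.
- by move=> y /(qiso_onto qR) [x /refl]; exists x.
- move=> x y x' y' [x0 [y0 [Rxy0 Ax By]]] [x1 [y1 [Rxy1 Ax' By']]].
  have [Ax1 By1] := qiso_dom qR Rxy1.
  exists (mul x0 x1), (mul y0 y1); split; first exact: (qiso_mul qR).
    by apply: index_core_lcosetM.
  by apply: index_core_lcosetM.
- move=> x y [x0 [y0 [Rxy0 Ax By]]]; have [Ax0 By0] := qiso_dom qR Rxy0.
  exists (inv x0), (inv y0); split; first exact: (qiso_inv qR).
    by apply: index_core_lcosetV.
  by apply: index_core_lcosetV.
- move=> x y [x0 [y0 [Rxy0 Ax By]]]; split => [Amx|Bmy].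
    have Amx0 : index_core A m x0.
      by have := subgroupM sAm Amx (subgroupV sAm Ax); rewrite tinvMg tinvgK tmulKVg.
    by rewrite -(tmulKVg y0 y); exact: subgroupM sBm (core_fwd _ _ Rxy0 Amx0) By.
  have Bmy0 : index_core B m y0.
    by have := subgroupM sBm Bmy (subgroupV sBm By); rewrite tinvMg tinvgK tmulKVg.
  by rewrite -(tmulKVg x0 x); exact: subgroupM sAm (core_bwd _ _ Rxy0 Bmy0) Ax.
- move=> x y a b [x0 [y0 [Rxy0 Ax By]]] Ama Bmb; exists x0, y0.
  by split; rewrite // tmulgA; [exact: subgroupM sAm Ax Ama | exact: subgroupM sBm By Bmb].
Qed.

End Coarsen.

Section Compact.
Hypothesis cT : compact [set: T].

Lemma index_le_open_subgroup S V : subgroup S -> subgroup V -> open V ->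
  exists m, index_le S V m.
Proof.
move=> sS sV oV.
have [||D' [_ cD']] := @compact_finite_subcover _ cT _ setT (fun c => lcos c V).
- by move=> c _; exact: open_lcoset.
- by move=> x; exists x => //; exact: lcoset_refl.
pose rep c := if pselect (exists z, S z /\ lcos c V z) is left e then projT1 (cid e) else one.
exists (size D'), (fun j => rep (nth one D' j)); split.
  by move=> j; rewrite /rep; case: pselect => [e|_]; [case: (cid e) => z [] | exact: subgroup1].
move=> x Sx; have [c c_D' cVx] := cD' x.
exists (index c D'); first by rewrite index_mem.
rewrite nth_index // /rep; case: pselect => [e|[]]; last by exists x.
case: (cid e) => z [_ /lcosetE Vz] /=; move/lcosetE: cVx => Vx.
by have := subgroupM sV (subgroupV sV Vz) Vx; rewrite tinvMg tinvgK -tmulgA tmulKVg.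
Qed.

Lemma lcosets_finite V : subgroup V -> open V -> finite_set [set lcos x V | x in setT].
Proof.
move=> sV oV; have [m Vm] := index_le_open_subgroup subgroupT sV oV.
by apply/finite_set_leP; exists m; exact: lcosets_card_le.
Qed.

Lemma clopen_rmul_stable C : open C -> closed C ->
  exists W, [/\ open W, W one & forall z w, C z -> W w -> C (mul z w)].
Proof.
move=> oC cC.
have /choice [UV UVP] : forall c, exists UV : set T * set T,
    [/\ open UV.1, open UV.2, UV.2 one, C c -> UV.1 c
      & forall u v, UV.1 u -> UV.2 v -> C (mul u v)].
  move=> c; have [Cc|nCc] := pselect (C c); last first.
    by exists (set0, setT); split => //=; [exact: open0 | exact: openT].
  have : nbhs (c, one) ((fun p : T * T => mul p.1 p.2) @^-1` C).
    by apply: (@mul_cont (c, one)); rewrite /= tmulg1; apply: open_nbhs_nbhs.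
  case=> [[U V]] /= [nU nV] UV.
  exists (U°, V°); split => /=.
  - exact: open_interior.
  - exact: open_interior.
  - exact: nbhs_singleton (nbhs_interior nV).
  - by move=> _; exact: nbhs_singleton (nbhs_interior nU).
  - by move=> u v Uu Vv; apply: (UV (u, v)); split; exact: interior_subset.
have [||D' [_ cD']] := @compact_finite_subcover _ cT _ setT (fun c => (UV c).1 `|` ~` C).
- by move=> c _; case: (UVP c) => oU *; exact: openU oU (closed_openC cC).
- move=> x; exists x => //; have [Cx|] := pselect (C x); last by right.
  by left; case: (UVP x) => _ _ _ /(_ Cx).
exists (\bigcap_(c in [set` D']) (UV c).2); split.
- by apply: open_finite_bigcap => [|c _]; [exact: finite_fset | case: (UVP c)].
- by move=> c _; case: (UVP c).
- move=> z w Cz Ww; have [c c_D' [Uz|//]] := cD' z.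
  by case: (UVP c) => _ _ _ _; apply => //; apply: Ww.
Qed.

(* Take the stabilizer of [C] under right translations. *)
Lemma clopen_subgroup C : clopen C -> C one -> exists S, [/\ subgroup S, open S & S `<=` C].
Proof.
move=> [oC cC] C1; have [W [oW W1 CW]] := clopen_rmul_stable oC cC.
pose S := [set x | forall y, C (mul y x) <-> C y].
have sS : subgroup S.
  split; first by move=> y; rewrite tmulg1.
    move=> x x' Sx Sx' y; rewrite tmulgA.
    by split => [/(Sx' (mul y x))/(Sx y) | /(Sx y)/(Sx' (mul y x))].
  move=> x Sx y; have := Sx (mul y (inv x)); rewrite tmulgKV.
  exact: iff_sym.
have W'S : W `&` inv @^-1` W `<=` S.
  move=> w [Ww Wiw] y; split => [Cyw|Cy]; last exact: CW.
  by have := CW _ _ Cyw Wiw; rewrite tmulgK.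
exists S; split => //.
- apply: (@open_of_lcosets (W `&` inv @^-1` W)) => [|/=|x Sx y /lcosetE W'y].
  + by apply: openI => //; exact: open_inv.
  + by rewrite tinvg1.
  + by rewrite -(tmulKVg x y); apply: subgroupM sS Sx (W'S _ W'y).
- by move=> x Sx; have := (Sx one).2 C1; rewrite tmul1g.
Qed.

Section CosetAction.
Variable W : set T.
Hypotheses (sW : subgroup W) (oW : open W).

Let cosets : {fset set T} := fset_set [set lcos x W | x in setT].

Let cosetsP c : c \in cosets <-> exists x, lcos x W = c.
Proof.
rewrite in_fset_set ?in_setE; last exact: lcosets_finite.
by split => [[x _ <-]|[x <-]]; exists x.
Qed.

Let act_mem x (c : cosets) : lcos (inv x) (val c) \in cosets.
Proof.
have /cosetsP [z <-] := valP c.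
by apply/cosetsP; exists (mul (inv x) z); rewrite lcosetM.
Qed.

Let act x (c : cosets) : cosets := insubd c (lcos (inv x) (val c)).

Let act_val x c : val (act x c) = lcos (inv x) (val c).
Proof. by rewrite insubdK //; exact: act_mem. Qed.

Let act_inj x : injective (act x).
Proof.
move=> c1 c2 /(congr1 val); rewrite !act_val => /(congr1 (lcos x)).
by rewrite !lcosetM tmulgV !lcoset1 => /val_inj.
Qed.

(* The action of [T] on the finitely many left cosets of [W]; its image is the finite quotient. *)
Let rho x : {perm cosets} := perm (@act_inj x).

Let rhoM x y : rho (mul x y) = (rho x * rho y)%g.
Proof.
apply/permP => c; rewrite permM !permE; apply: val_inj.
by rewrite !act_val lcosetM tinvMg.
Qed.

Let rho1P x : rho x = 1%g <-> forall c, act x c = c.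
Proof.
split => [x1 c|xc]; last by apply/permP => c; rewrite permE perm1 xc.
by have := congr1 (fun p : {perm cosets} => p c) x1; rewrite permE perm1.
Qed.

Let act_fixedE (c : cosets) : exists z,
  [set x | act x c = c] = inv @^-1` (mul^~ z @^-1` (mul (inv z) @^-1` W)).
Proof.
have /cosetsP [z zc] := valP c; exists z.
apply/seteqP; split => x /=.
  move=> /(congr1 val); rewrite act_val -zc lcosetM => xzc.
  by have := lcoset_refl (mul (inv x) z) sW; rewrite xzc => /lcosetE.
by move=> Wz; apply: val_inj; rewrite act_val -zc lcosetM; exact: lcoset_eq.
Qed.

Let rho_image : group_set [set p | `[< exists x, rho x = p >]].
Proof.
apply/group_setP; split.
  rewrite inE; apply/asboolP; exists one; apply/rho1P => c.
  by apply: val_inj; rewrite act_val tinvg1 lcoset1.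
move=> p q; rewrite !inE => /asboolP[x <-] /asboolP[y <-].
by apply/asboolP; exists (mul x y); exact: rhoM.
Qed.

Let quo := subg_of (Group rho_image).

Let psi x : quo := subg _ (rho x).

Let rho_in x : rho x \in Group rho_image.
Proof. by rewrite inE; apply/asboolP; exists x. Qed.

Let psiM : {morph psi : x y / mul x y >-> (x * y)%g}.
Proof. by move=> x y; rewrite /psi rhoM subgM // rho_in. Qed.

Let psi1P x : psi x = 1%g <-> forall c, act x c = c.
Proof.
rewrite -rho1P; split => [/(congr1 sgval)|x1]; first by rewrite subgK ?rho_in.
by apply: subg_inj; rewrite subgK ?rho_in.
Qed.

Let ker_open : open [set x | psi x = 1%g].
Proof.
have -> : [set x | psi x = 1%g] = \bigcap_(U in (fun c => [set x | act x c = c]) @` setT) U.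
  apply/seteqP; split => [x /psi1P xc _ [c _ <-] //|x xc].
  by apply/psi1P => c; apply: (xc [set y | act y c = c]); exists c.
apply: open_finite_bigcap => [|_ [c _ <-]]; first exact: finite_image finite_finset.
by have [z ->] := act_fixedE c; apply/open_inv/open_rmul/open_lmul.
Qed.

Lemma open_subgroup_quotient : exists (hT : finGroupType) (f : T -> hT),
  [/\ {morph f : x y / mul x y >-> (x * y)%g}, continuous_to_discrete f,
      (forall h, exists x, f x = h) & forall x, f x = 1%g -> W x].
Proof.
have psi_onto h : exists x, psi x = h.
  have := subgP h; rewrite inE => /asboolP [x xh].
  by exists x; rewrite /psi xh sgvalK.
exists quo, psi; split => //.
- move=> h; have [x0 <-] := psi_onto h.
  have -> : psi @^-1` [set psi x0] = lcos x0 [set x | psi x = 1%g].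
    by apply/seteqP; split => x /=; rewrite lcosetE /= => /(tmorph_eq psiM).
  by apply: open_lcoset; exact: ker_open.
- have W_in : W \in cosets by apply/cosetsP; exists one; rewrite lcoset1.
  move=> x /psi1P /(_ [` W_in]%fset) /(congr1 val); rewrite act_val /= => xW.
  by have := lcoset_refl (inv x) sW; rewrite xW => /(subgroupV sW); rewrite tinvgK.
Qed.

End CosetAction.

(* [R] is determined by the pairs of cosets [(x A', y B')] it relates. *)
Lemma quotient_isos_finite A B A' B' : subgroup A' -> subgroup B' -> open A' -> open B' ->
  finite_set [set R | quotient_iso A B A' B' R].
Proof.
move=> sA' sB' oA' oB'.
pose code R := [set p : set T * set T | exists x y, R x y /\ p = (lcos x A', lcos y B')].
pose decode (P : set (set T * set T)) x y := P (lcos x A', lcos y B').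
apply: (@sub_finite_set _ _
  (decode @` [set P | P `<=` [set lcos x A' | x in setT] `*` [set lcos y B' | y in setT]])).
  move=> R qR; exists (code R); first by move=> _ [x [y [_ ->]]]; split; [exists x | exists y].
  apply: boolp.funext => x; apply: boolp.funext => y; apply: boolp.propext.
  split => [[x0 [y0 [Rxy0 [x0x y0y]]]]|Rxy]; last by exists x, y.
  have A'x : A' (mul (inv x0) x) by apply/lcosetE; rewrite -x0x; exact: lcoset_refl.
  have B'y : B' (mul (inv y0) y) by apply/lcosetE; rewrite -y0y; exact: lcoset_refl.
  by have := qiso_sat qR Rxy0 A'x B'y; rewrite !tmulKVg.
by apply: finite_image; apply: finite_powerset; apply: finite_setX; exact: lcosets_finite.
Qed.

Section Profinite.
Hypotheses (hT : hausdorff_space T) (tdT : totally_disconnected [set: T]).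

Lemma open_subgroup_avoid z : z <> one -> exists U, [/\ subgroup U, open U & ~ U z].
Proof.
move=> z1; have one_z : one != z by apply/eqP => /esym.
have [C [clC C1 nCz]] := compact_totally_disconnected_zero_dimensional cT hT tdT one_z.
have [S [sS oS SC]] := clopen_subgroup clC C1.
by exists S; split => // /SC.
Qed.

Section FiniteIndex.
Hypothesis fin_index :
  forall n, (0 < n)%N -> finite_set (open_subgroups_of_index mul one inv n).

Lemma open_subgroups_index_le_finite S m : subgroup S -> open S ->
  finite_set (open_subgroups_index_le S m).
Proof.
move=> sS oS; have [a Sa] := index_le_open_subgroup subgroupT sS oS.
apply: (@sub_finite_set _ _
  (\bigcup_(n in [set n | (0 < n <= a * m)%N]) open_subgroups_of_index mul one inv n)).
  move=> V [sV oV _ VS]; have [n nam Vn] := index_le_has_index sV (index_le_trans Sa VS).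
  by exists n => //; split.
apply: bigcup_finite => [|n /andP[n0 _]]; last exact: fin_index.
apply: (@sub_finite_set _ _ `I_(a * m).+1) => [n /andP[_ nam]|]; last exact: finite_II.
by rewrite /= ltnS.
Qed.

Lemma index_core_open S m : subgroup S -> open S -> open (index_core S m).
Proof.
move=> sS oS; apply: open_finite_bigcap; first exact: open_subgroups_index_le_finite.
by move=> V [].
Qed.

Lemma index_core_closed S m : subgroup S -> open S -> closed (index_core S m).
Proof.
by move=> sS oS; apply: open_subgroup_closed; [exact: index_core_subgroup | exact: index_core_open].
Qed.

Lemma index_core_trivial S z : subgroup S -> open S -> (forall m, index_core S m z) -> z = one.
Proof.
move=> sS oS Sz; apply: contrapT => z1.
have [U [sU oU nUz]] := open_subgroup_avoid z1.
have sUS := subgroupI sU sS; have oUS := openI oU oS.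
have [a USa] := index_le_open_subgroup sS sUS oUS.
by have [] := index_core_sub (And4 sUS oUS (@subIsetr _ U S) USa) (Sz a).
Qed.

Lemma index_core_nbhs S W : subgroup S -> open S -> nbhs one W ->
  exists m, index_core S m.+1 `<=` W.
Proof.
move=> sS oS W1; apply: contrapT => noW.
have [m|m z [Sz nWz]|m|z Fz] := @compact_nonincreasing_meet _ cT
    (fun m => index_core S m.+1 `&` ~` W°).
- by apply: closedI; [exact: index_core_closed | exact/open_closedC/open_interior].
- by split => //; apply: index_core_mono Sz.
- apply: contrapT => F0; apply: noW; exists m => z Sz.
  by apply: interior_subset; apply: contrapT => nWz; apply: F0; exists z.
have z1 : z = one.
  by apply: index_core_trivial sS oS _ => m; apply: (index_core_mono (leqnSn m)); case: (Fz m).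
by case: (Fz 0%N) => _; rewrite z1; apply.
Qed.

Section Limit.
Variables (A B : set T) (Rs : nat -> T -> T -> Prop).
Hypotheses (sA : subgroup A) (oA : open A) (sB : subgroup B) (oB : open B).
Hypothesis qRs : forall m, quotient_iso A B (index_core A m.+1) (index_core B m.+1) (Rs m).
Hypothesis RsS : forall m x y, Rs m.+1 x y -> Rs m x y.

Let fiberE m x y0 : Rs m x y0 -> [set y | Rs m x y] = mul (inv y0) @^-1` index_core B m.+1.
Proof.
move=> Rxy0; apply/seteqP; split => y /=.
  by move=> Rxy; exact: (quotient_iso_uniqr (qRs m) (index_core_subgroup _ _) Rxy0 Rxy).
move=> By; have := qiso_sat (qRs m) Rxy0 (subgroup1 (index_core_subgroup A m.+1)) By.
by rewrite tmulg1 tmulKVg.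
Qed.

Let limit_exists x : A x -> exists y, forall m, Rs m x y.
Proof.
move=> Ax; have Rx m : exists y0, Rs m x y0 := qiso_total (qRs m) Ax.
apply: (@compact_nonincreasing_meet _ cT (fun m => [set y | Rs m x y])) => m.
- have [y0 Rxy0] := Rx m; rewrite (fiberE Rxy0).
  by apply: closed_lmul; exact: index_core_closed.
- by move=> y; apply: RsS.
- by have [y0 ?] := Rx m; exists y0.
Qed.

Let limit_unique x y y' : (forall m, Rs m x y) -> (forall m, Rs m x y') -> y = y'.
Proof.
move=> Rxy Rxy'; suff yy' : mul (inv y) y' = one by rewrite -(tmulKVg y y') yy' tmulg1.
apply: index_core_trivial sB oB _ => m; apply: (index_core_mono (leqnSn m)).
exact: (quotient_iso_uniqr (qRs m) (index_core_subgroup _ _) (Rxy m) (Rxy' m)).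
Qed.

(* The value outside [A] is irrelevant. *)
Definition limit x :=
  if pselect (exists y, forall m, Rs m x y) is left e then projT1 (cid e) else x.

Let limitP x : A x -> forall m, Rs m x (limit x).
Proof.
move=> Ax; rewrite /limit; case: pselect => [e|[]]; last exact: limit_exists.
by case: (cid e).
Qed.

Let limit_eq x y : (forall m, Rs m x y) -> limit x = y.
Proof.
move=> Rxy; have [Ax _] := qiso_dom (qRs 0) (Rxy 0%N).
exact: limit_unique (limitP Ax) Rxy.
Qed.

Let limit_cont : {within A, continuous limit}.
Proof.
apply: continuous_in_subspaceT => x /set_mem Ax W; rewrite nbhsE => -[U [oU Ux] UW].
have [m BmU] : exists m, index_core B m.+1 `<=` mul (limit x) @^-1` U.
  apply: index_core_nbhs => //; apply: open_nbhs_nbhs.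
  by split; [exact: open_lmul | rewrite /= tmulg1].
apply: (filterS _ (@open_nbhs_nbhs _ x (lcos x (index_core A m.+1)) _)); last first.
  by split; [exact/open_lcoset/index_core_open | exact/lcoset_refl/index_core_subgroup].
move=> x' /lcosetE Amx'.
have Ax' : A x'.
  by rewrite -(tmulKVg x x'); exact: (subgroupM sA Ax (index_core_subS sA oA (ltn0Sn m) Amx')).
have := qiso_sat (qRs m) (limitP Ax m) Amx' (subgroup1 (index_core_subgroup B m.+1)).
rewrite tmulKVg tmulg1 => Rxx'.
apply: UW; have := BmU _ (quotient_iso_uniqr (qRs m) (index_core_subgroup _ _) Rxx' (limitP Ax' m)).
by rewrite /= tmulKVg.
Qed.

Lemma limit_spec :
  [/\ forall x, A x -> B (limit x), forall x, A x -> forall m, Rs m x (limit x),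
      forall x y, (forall m, Rs m x y) -> limit x = y,
      forall x y, A x -> A y -> limit (mul x y) = mul (limit x) (limit y)
    & {within A, continuous limit}].
Proof.
split.
- by move=> x Ax; case: (qiso_dom (qRs 0) (limitP Ax 0%N)).
- exact: limitP.
- exact: limit_eq.
- move=> x y Ax Ay; apply: limit_eq => m.
  exact: (qiso_mul (qRs m) (limitP Ax m) (limitP Ay m)).
- exact: limit_cont.
Qed.

End Limit.

Lemma coherent_quotient_isos_top_iso A B (Rs : nat -> T -> T -> Prop) :
  subgroup A -> open A -> subgroup B -> open B ->
  (forall m, quotient_iso A B (index_core A m.+1) (index_core B m.+1) (Rs m)) ->
  (forall m x y, Rs m.+1 x y -> Rs m x y) -> top_group_isomorphic mul A B.
Proof.
move=> sA oA sB oB qRs RsS.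
have [fAB fP f_eq fM f_cont] := limit_spec sA oA sB oB qRs RsS.
have [gBA gP g_eq _ g_cont] := limit_spec sB oB sA oA (fun m => quotient_iso_sym (qRs m))
  (fun m y x => RsS m x y).
exists (limit Rs), (limit (fun m y x => Rs m x y)); split; split => //.
- by move=> x Ax; apply: g_eq => m; exact: fP.
- by move=> y By; apply: f_eq => m; exact: gP.
Qed.

Section Preimages.
Variables (gT : finGroupType) (G1 G2 : {group gT}) (phi : T -> gT).
Hypotheses (phiM : {morph phi : x y / mul x y >-> (x * y)%g})
  (phi_cont : continuous_to_discrete phi).

Local Notation A := (phi @^-1` [set g | g \in G1]).
Local Notation B := (phi @^-1` [set g | g \in G2]).

Definition separating_quotient := exists (hT : finGroupType) (psi : T -> hT)
    (theta : {morphism [set: hT] >-> gT}),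
  [/\ {morph psi : x y / mul x y >-> (x * y)%g}, continuous_to_discrete psi,
      (forall h : hT, exists x : T, psi x = h), (forall x : T, phi x = theta (psi x)) &
      ~~ ((theta @*^-1 G1)%g \isog (theta @*^-1 G2)%g)].

Hypothesis no_separating_quotient : ~ separating_quotient.

(* As the finite quotient [T / ker psi] does not separate [G1] and [G2], the preimages of
   [G1] and [G2] in it are isomorphic. *)
Lemma finite_quotient_quotient_iso W :
  subgroup W -> open W -> W `<=` phi @^-1` [set 1%g] ->
  exists N R, [/\ subgroup N, open N, N `<=` W & quotient_iso A B N N R].
Proof.
move=> sW oW Wker.
have [qT [psi [psiM psi_cont psi_onto psiW]]] := open_subgroup_quotient sW oW.
have /choice [pre preP] := psi_onto.
pose theta h := phi (pre h).
have theta_psi x : theta (psi x) = phi x.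
  apply/(tmorph_eq phiM); apply: Wker; apply: psiW.
  by apply/(tmorph_eq psiM); rewrite preP.
have thetaM : {in [set: qT]%SET &, {morph theta : a b / (a * b)%g}}.
  by move=> a b _ _; rewrite -(preP a) -(preP b) -psiM !theta_psi phiM.
pose th := Morphism thetaM.
have thetaE (H : {group gT}) :
    phi @^-1` [set g | g \in H] = psi @^-1` [set h | h \in (th @*^-1 H)%g].
  by apply/seteqP; split => x; rewrite /= !inE /= theta_psi.
have /isogP [f injf fG] : (th @*^-1 G1 \isog th @*^-1 G2)%g.
  apply: contrapT => /negP niso; apply: no_separating_quotient.
  by exists qT, psi, th; split => // x; rewrite /= theta_psi.
rewrite !thetaE; exists (psi @^-1` [set 1%g]); eexists; split.
- exact: subgroup_ker.
- exact: continuous_to_discrete_open.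
- by move=> x /psiW.
- exact: (quotient_iso_of_isog psiM psi_onto injf fG).
Qed.

Lemma preimages_open_subgroups : [/\ subgroup A, subgroup B, open A & open B].
Proof.
split; [exact: subgroup_preim | exact: subgroup_preim |
        exact: continuous_to_discrete_open | exact: continuous_to_discrete_open].
Qed.

Lemma quotient_iso_index_cores m :
  exists R, quotient_iso A B (index_core A m.+1) (index_core B m.+1) R.
Proof.
have [sA sB oA oB] := preimages_open_subgroups.
pose W := index_core A m.+1 `&` index_core B m.+1 `&` phi @^-1` [set 1%g].
have sW : subgroup W.
  by apply: subgroupI; [apply: subgroupI; exact: index_core_subgroup | exact: subgroup_ker].
have oW : open W.
  by apply: openI; [apply: openI; exact: index_core_open | exact: continuous_to_discrete_open].
have [N [R [sN oN NW qR]]] := finite_quotient_quotient_iso sW oW (fun x Wx => Wx.2).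
exists (coarsen A B R m.+1); apply: (coarsen_quotient_iso qR) => // x /NW [[]] //.
Qed.

Lemma preimages_top_isomorphic : top_group_isomorphic mul A B.
Proof.
have [sA sB oA oB] := preimages_open_subgroups.
pose S m := [set R | quotient_iso A B (index_core A m.+1) (index_core B m.+1) R].
have S_finite m : finite_set (S m).
  exact: quotient_isos_finite (index_core_subgroup _ _) (index_core_subgroup _ _)
    (index_core_open _ sA oA) (index_core_open _ sB oB).
have S_neq0 m : S m !=set0 by exact: quotient_iso_index_cores.
have coarsen_S m R : S m.+1 R -> S m (coarsen A B R m.+1).
  move=> qR; apply: (coarsen_quotient_iso qR) => //;
    by [exact: index_core_subgroup | exact: index_core_open | exact: index_core_mono].
have [Rs RsP] := inverse_limit_neq0 S_finite S_neq0 coarsen_S.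
apply: (@coherent_quotient_isos_top_iso _ _ Rs) => // [m|m x y Rxy]; first by case: (RsP m).
case: (RsP m) => _ <-; exists x, y; split; rewrite // tmulVg.
all: exact: subgroup1 (index_core_subgroup _ _).
Qed.

End Preimages.

End FiniteIndex.
End Profinite.

End Compact.
End Continuity.
End TopologicalGroup.

Theorem proposition3p1
  (gT : finGroupType) (G1 G2 : {group gT})
  (T : topologicalType) (mul : T -> T -> T) (one : T) (inv : T -> T)
  (phi : T -> gT) :
  is_profinite_group mul one inv ->
  (forall x y, phi (mul x y) = (phi x * phi y)%g) ->
  continuous_to_discrete phi ->
  (forall g : gT, exists x : T, phi x = g) ->
  ~ top_group_isomorphic mul (phi @^-1` [set g | g \in G1])
                             (phi @^-1` [set g | g \in G2]) ->
  (forall n : nat, (0 < n)%N -> finite_set (open_subgroups_of_index mul one inv n)) ->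
  exists (hT : finGroupType) (psi : T -> hT) (theta : {morphism [set: hT] >-> gT}),
    [/\ (forall x y, psi (mul x y) = (psi x * psi y)%g),
        continuous_to_discrete psi,
        (forall h : hT, exists x : T, psi x = h),
        (forall x : T, phi x = theta (psi x)) &
        ~~ ((theta @*^-1 G1)%g \isog (theta @*^-1 G2)%g)].
Proof.
move=> [[Hgrp mul_cont inv_cont] cT hT tdT] phiM phi_cont _ not_iso fin_index.
apply: contrapT => no_sep; apply: not_iso.
exact: (preimages_top_isomorphic Hgrp mul_cont inv_cont cT hT tdT fin_index phiM phi_cont no_sep).
Qed.
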